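(* Let $u,v$ be positive real numbers. Then $$\sum_{\substack{j\in\mathbb{Z}\\ \frac12-v\le j\le u-\frac12}}\frac{1}{\sqrt{(u-j)(v+j)}}\le 12.$$ *)

From Stdlib Require Import Reals ZArith List.
Open Scope R_scope.

Definition term (u v : R) (j : Z) : R := / sqrt ((u - IZR j) * (v + IZR j)).

Definition in_range (u v : R) (j : Z) : bool :=
  if Rle_dec (1/2 - v) (IZR j) then
    if Rle_dec (IZR j) (u - 1/2) then true else false
  else false.

(* A bound M such that every j in the range satisfies |j| <= M. *)
Definition bound (u v : R) : Z := (Z.abs (up u) + Z.abs (up v))%Z.

Definition Zwindow (M : Z) : list Z :=
  map (fun k : nat => (Z.of_nat k - M)%Z) (seq 0 (Z.to_nat (2 * M + 1))).

Definition range_sum (u v : R) : R :=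
  fold_right Rplus 0
    (map (term u v) (filter (in_range u v) (Zwindow (bound u v)))).

(** Write [a = u - j] and [b = v + j], so that [a + b = S := u + v] is fixed and
    the summation range is [a, b >= 1/2].  If [a <= b] then [b >= S/2], and by
    concavity of the square root
    [1/sqrt a <= 2 (sqrt (a + 1/2) - sqrt (a - 1/2))], so the summand at [j] is
    at most [2/sqrt(S/2)] times an increment of [sqrt] over [[a - 1/2, a + 1/2]].
    These increments telescope in [j]; capping [sqrt] at [(S + 1)/2] keeps the
    potential bounded by [2/sqrt(S/2) * sqrt((S + 1)/2) <= 4], so the sum is at
    most [8]. *)

From Pilot Require Import Defs.
From Stdlib Require Import Reals Lra Lia Psatz ZArith List.
Open Scope R_scope.

Definition sqrt_cap (K x : R) : R := sqrt (Rmin x K).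

Definition cap_step (K x : R) : R := sqrt_cap K (x + 1/2) - sqrt_cap K (x - 1/2).

Lemma sqrt_cap_le_compat K x y : x <= y -> sqrt_cap K x <= sqrt_cap K y.
Proof.
  intros Hxy; apply sqrt_le_1_alt.
  unfold Rmin; destruct (Rle_dec x K), (Rle_dec y K); lra.
Qed.

Lemma sqrt_cap_bounds K x : 0 <= sqrt_cap K x <= sqrt K.
Proof. split; [apply sqrt_pos | apply sqrt_le_1_alt, Rmin_r]. Qed.

Lemma sqrt_cap_id K x : x <= K -> sqrt_cap K x = sqrt x.
Proof. intros HxK; unfold sqrt_cap; rewrite Rmin_left; auto. Qed.

Lemma cap_step_ge0 K x : 0 <= cap_step K x.
Proof.
  unfold cap_step.
  assert (sqrt_cap K (x - 1/2) <= sqrt_cap K (x + 1/2)) by (apply sqrt_cap_le_compat; lra).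
  lra.
Qed.

Lemma inv_sqrt_le_sqrt_diff a : 1/2 <= a ->
  / sqrt a <= 2 * (sqrt (a + 1/2) - sqrt (a - 1/2)).
Proof.
  intros Ha.
  assert (Hp2 := sqrt_sqrt (a + 1/2) ltac:(lra)).
  assert (Hq2 := sqrt_sqrt (a - 1/2) ltac:(lra)).
  assert (Hr2 := sqrt_sqrt a ltac:(lra)).
  assert (Hp := sqrt_pos (a + 1/2)). assert (Hq := sqrt_pos (a - 1/2)).
  assert (Hr := sqrt_lt_R0 a ltac:(lra)).
  assert (Hpq : sqrt (a - 1/2) <= sqrt (a + 1/2)) by (apply sqrt_le_1_alt; lra).
  set (p := sqrt (a + 1/2)) in *. set (q := sqrt (a - 1/2)) in *.
  set (r := sqrt a) in *.
  assert (Hconj : (p - q) * (p + q) = 1) by nra.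
  (* concavity, via AM-GM: (p + q)^2 = 2a + 2pq <= 4a *)
  assert (Hconc : p + q <= 2 * r) by nra.
  apply (Rmult_le_reg_l r); [lra|].
  rewrite Rinv_r by lra. nra.
Qed.

Lemma inv_sqrt_mul_le a b : 1/2 <= a <= b ->
  / sqrt (a * b) <= 2 / sqrt ((a + b) / 2) * (sqrt (a + 1/2) - sqrt (a - 1/2)).
Proof.
  intros [Ha Hab].
  assert (Hr := sqrt_lt_R0 a ltac:(lra)).
  assert (Hs := sqrt_lt_R0 ((a + b) / 2) ltac:(lra)).
  assert (Hsb : sqrt ((a + b) / 2) <= sqrt b) by (apply sqrt_le_1_alt; lra).
  assert (Hdiff := inv_sqrt_le_sqrt_diff a Ha).
  rewrite sqrt_mult by lra.
  apply Rle_trans with (/ sqrt a * / sqrt ((a + b) / 2)).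
  - rewrite <- Rinv_mult. apply Rinv_le_contravar; nra.
  - replace (2 / sqrt ((a + b) / 2) * (sqrt (a + 1/2) - sqrt (a - 1/2)))
      with (2 * (sqrt (a + 1/2) - sqrt (a - 1/2)) * / sqrt ((a + b) / 2)) by (unfold Rdiv; ring).
    apply Rmult_le_compat_r; [left; apply Rinv_0_lt_compat|]; lra.
Qed.

Lemma inv_sqrt_mul_le_cap_steps a b S : 1/2 <= a -> 1/2 <= b -> a + b = S ->
  / sqrt (a * b) <=
    2 / sqrt (S / 2) * cap_step ((S + 1) / 2) a + 2 / sqrt (S / 2) * cap_step ((S + 1) / 2) b.
Proof.
  intros Ha Hb HS.
  assert (Hc : 0 <= 2 / sqrt (S / 2))
    by (apply Rlt_le, Rdiv_lt_0_compat; [lra | apply sqrt_lt_R0; lra]).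
  assert (Hsa := cap_step_ge0 ((S + 1) / 2) a).
  assert (Hsb := cap_step_ge0 ((S + 1) / 2) b).
  assert (Hmin : forall x y, 1/2 <= x <= y -> x + y = S ->
            / sqrt (x * y) <= 2 / sqrt (S / 2) * cap_step ((S + 1) / 2) x).
  { intros x y Hxy <-. unfold cap_step.
    rewrite !sqrt_cap_id by lra. apply inv_sqrt_mul_le; lra. }
  destruct (Rle_dec a b).
  - assert (/ sqrt (a * b) <= 2 / sqrt (S / 2) * cap_step ((S + 1) / 2) a)
      by (apply Hmin; lra).
    nra.
  - rewrite (Rmult_comm a b).
    assert (/ sqrt (b * a) <= 2 / sqrt (S / 2) * cap_step ((S + 1) / 2) b)
      by (apply Hmin; lra).
    nra.
Qed.

Lemma fold_right_Rplus_map_filter {A : Type} (p : A -> bool) (f : A -> R) (l : list A) :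
  fold_right Rplus 0 (map f (filter p l)) =
  fold_right Rplus 0 (map (fun x => if p x then f x else 0) l).
Proof.
  induction l as [|x l IH]; simpl; auto.
  destruct (p x); simpl; rewrite IH; ring.
Qed.

Lemma sum_seq_le_telescope (g T : nat -> R) :
  (forall k, g k <= T k - T (S k)) ->
  forall n s, fold_right Rplus 0 (map g (seq s n)) <= T s - T (s + n)%nat.
Proof.
  intros Hstep n; induction n as [|n IH]; intros s; simpl.
  - rewrite Nat.add_0_r; lra.
  - rewrite Nat.add_succ_r. specialize (IH (S s)). specialize (Hstep s). simpl in IH. lra.
Qed.

Lemma sum_Zwindow_le_telescope (f T : Z -> R) (lo hi : R) (M : Z) :
  (forall z, f z <= T z - T (z + 1)%Z) -> (forall z, lo <= T z <= hi) ->
  fold_right Rplus 0 (map f (Zwindow M)) <= hi - lo.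
Proof.
  intros Hstep Hbound. unfold Zwindow. rewrite map_map.
  set (n := Z.to_nat (2 * M + 1)).
  eapply Rle_trans.
  - apply (sum_seq_le_telescope _ (fun k => T (Z.of_nat k - M)%Z)).
    intros k. replace (Z.of_nat (S k) - M)%Z with ((Z.of_nat k - M) + 1)%Z by lia.
    apply Hstep.
  - destruct (Hbound (Z.of_nat 0 - M)%Z), (Hbound (Z.of_nat (0 + n) - M)%Z). lra.
Qed.

Definition range_term (u v : R) (j : Z) : R := if in_range u v j then term u v j else 0.

Definition cap (u v : R) : R := (u + v + 1) / 2.

Definition scale (u v : R) : R := 2 / sqrt ((u + v) / 2).

Definition potential (u v : R) (j : Z) : R :=
  scale u v * (sqrt_cap (cap u v) (u - IZR j + 1/2) - sqrt_cap (cap u v) (v + IZR j - 1/2)).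

Lemma range_sum_eq (u v : R) :
  range_sum u v = fold_right Rplus 0 (map (range_term u v) (Zwindow (Defs.bound u v))).
Proof. apply fold_right_Rplus_map_filter. Qed.

Lemma in_range_bounds u v j : in_range u v j = true -> 1/2 - v <= IZR j <= u - 1/2.
Proof.
  unfold in_range. destruct (Rle_dec _ _); [destruct (Rle_dec _ _)|]; easy.
Qed.

Lemma range_term_eq0 u v j : u + v < 1 -> range_term u v j = 0.
Proof.
  intros HS. unfold range_term.
  destruct (in_range u v j) eqn:Hin; auto.
  apply in_range_bounds in Hin. lra.
Qed.

Lemma scale_ge0 u v : 0 < u + v -> 0 <= scale u v.
Proof. intros HS. apply Rlt_le, Rdiv_lt_0_compat; [lra | apply sqrt_lt_R0; lra]. Qed.

Lemma range_term_le_potential_step u v j : 0 < u + v ->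
  range_term u v j <= potential u v j - potential u v (j + 1).
Proof.
  intros HS.
  assert (Hdecr : potential u v j - potential u v (j + 1) =
            scale u v * cap_step (cap u v) (u - IZR j)
            + scale u v * cap_step (cap u v) (v + IZR j)).
  { unfold potential, cap_step. rewrite plus_IZR.
    replace (u - (IZR j + 1) + 1/2) with (u - IZR j - 1/2) by lra.
    replace (v + (IZR j + 1) - 1/2) with (v + IZR j + 1/2) by lra.
    ring. }
  rewrite Hdecr. unfold range_term.
  destruct (in_range u v j) eqn:Hin.
  - apply in_range_bounds in Hin.
    apply inv_sqrt_mul_le_cap_steps; lra.
  - assert (Hc := scale_ge0 u v HS).
    assert (Ha := cap_step_ge0 (cap u v) (u - IZR j)).
    assert (Hb := cap_step_ge0 (cap u v) (v + IZR j)).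
    nra.
Qed.

Lemma potential_bounds u v j : 0 < u + v ->
  - (scale u v * sqrt (cap u v)) <= potential u v j <= scale u v * sqrt (cap u v).
Proof.
  intros HS. unfold potential.
  assert (Hc := scale_ge0 u v HS).
  assert (H1 := sqrt_cap_bounds (cap u v) (u - IZR j + 1/2)).
  assert (H2 := sqrt_cap_bounds (cap u v) (v + IZR j - 1/2)).
  split; nra.
Qed.

Lemma scale_mul_sqrt_cap_le u v : 1 <= u + v -> scale u v * sqrt (cap u v) <= 4.
Proof.
  intros HS. unfold scale, cap.
  assert (Hs := sqrt_lt_R0 ((u + v) / 2) ltac:(lra)).
  (* (S + 1)/2 <= 2^2 * (S/2) as S >= 1 *)
  assert (Hcap : sqrt ((u + v + 1) / 2) <= 2 * sqrt ((u + v) / 2)).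
  { rewrite <- (sqrt_square 2) at 2 by lra. rewrite <- sqrt_mult by lra.
    apply sqrt_le_1_alt. lra. }
  unfold Rdiv at 1. rewrite Rmult_assoc.
  apply (Rmult_le_reg_r (sqrt ((u + v) / 2))); [lra|].
  replace (2 * (/ sqrt ((u + v) / 2) * sqrt ((u + v + 1) / 2)) * sqrt ((u + v) / 2))
    with (2 * sqrt ((u + v + 1) / 2)) by (field; lra).
  lra.
Qed.

Theorem lemma6p7 (u v : R) (hu : 0 < u) (hv : 0 < v) :
  range_sum u v <= 12.
Proof.
  rewrite range_sum_eq.
  destruct (Rlt_le_dec (u + v) 1) as [Hsmall | Hlarge].
  - apply Rle_trans with (0 - 0); [|lra].
    apply (sum_Zwindow_le_telescope _ (fun _ => 0)); intros j.
    + rewrite range_term_eq0 by lra. lra.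
    + lra.
  - apply Rle_trans with (scale u v * sqrt (cap u v) - - (scale u v * sqrt (cap u v))).
    + apply (sum_Zwindow_le_telescope _ (potential u v)); intros j.
      * apply range_term_le_potential_step; lra.
      * apply potential_bounds; lra.
    + assert (Hle := scale_mul_sqrt_cap_le u v Hlarge). lra.
Qed.
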